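(* Let $E$, $v$ and $f_T$ be as described in the context. Then, for $s\in(0,\frac{\alpha}{2})$, \begin{equation*} a_{ij}(x)\partial_{ij}(\Delta_e^sv(x))\geq F_s(x),\ \ \ \ \forall x\in\mathbb{R}^n,\ e\in E\setminus\{0\}, \end{equation*} where $a_{ij}(x)=cof_{ij}(D^2v(x))$ (the algebraic cofactor of the $(i,j)$ entry of $D^2v(x)$) and \begin{equation*} F_s(x):=n\left(\det(D^2v(x))^{\frac{n-1}{n}}\right)\left(\frac{f_T^{\frac{1}{n}}(x+e)+f_T^{\frac{1}{n}}(x-e)-2f_T^{\frac{1}{n}}(x)}{|e|^{2s}}\right). \end{equation*}
   Context: Setting: $\alpha\in(0,1)$; $f_p$ is a positive periodic function on $\mathbb{R}^n$ with $d_0^{-1}\leq f_p\leq d_0$, $[f_p]_{C^\alpha(\mathbb{R}^n)}\leq d_0$, and (after normalization) $f_p(x+e_i)=f_p(x)$ for the standard basis vectors $e_i$. $u$ is a convex solution of $\det(D^2u)=f$ in $\mathbb{R}^n$ (with $f$ a $C^\alpha$ perturbation of $f_p$ decaying at infinity), which after modification on a compact set is assumed $C^{2,\alpha}_{loc}(\mathbb{R}^n)$ with $f\in C^\alpha(\mathbb{R}^n)$. $T$ is a linear transform with $\det T=1$ such that $|u(Tx)-\frac12|x|^2|\leq c_0|x|^{2-\theta}$ for $|x|\geq1$. Set $v=u\circ T$, $f_T(x)=f(T(x))$, $(f_p)_T(x)=f_p(T(x))$, so that $\det(D^2v)=f_T$ in $\mathbb{R}^n$ and $v\in C^2$ with $c_1I\leq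 D^2v\leq c_2I$ for positive constants $c_1,c_2$. Let $p_i:=T^{-1}e_i$, so $(f_p)_T(x+p_i)=(f_p)_T(x)$, and $E:=\{k_1p_1+\cdots+k_np_n:\ k_1,\dots,k_n\in\mathbb{Z}\}$. For $e\in\mathbb{R}^n\setminus\{0\}$ and $s\in(0,1)$, the $2s$-order increment is $\Delta_e^sv(x):=\frac{v(x+e)+v(x-e)-2v(x)}{|e|^{2s}}$. Summation over repeated indices $i,j$ is implied. *)

From HB Require Import structures.
From mathcomp Require Import all_boot all_order all_algebra.
From mathcomp Require Import all_classical all_reals all_analysis.
Set Implicit Arguments. Unset Strict Implicit. Unset Printing Implicit Defensive.
Import Order.TTheory GRing.Theory Num.Theory.
Import numFieldNormedType.Exports.
Local Open Scope ring_scope.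

Section Defs.
Variables (R : realType) (n : nat).
Local Notation V := 'rV[R]_n.

Definition basis_vec (i : 'I_n) : V := delta_mx 0 i.

Definition partial (f : V -> R) (i : 'I_n) : V -> R :=
  fun x => derive f x (basis_vec i).

Definition hessian (f : V -> R) (x : V) : 'M[R]_n :=
  \matrix_(i, j) partial (partial f j) i x.

Definition C2 (f : V -> R) : Prop :=
  (forall x i, derivable f x (basis_vec i)) /\
  (forall x i j, derivable (partial f j) x (basis_vec i)) /\
  (forall i j, continuous (partial (partial f j) i)).

Definition enorm (x : V) : R := Num.sqrt (\sum_i x 0 i ^+ 2).

Definition qform (A : 'M[R]_n) (xi : V) : R := (xi *m A *m xi^T) 0 0.
Definition sqnorm (xi : V) : R := \sum_i xi 0 i ^+ 2.

Definition incr (s : R) (e : V) (v : V -> R) : V -> R :=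
  fun x => (v (x + e) + v (x - e) - 2 * v x) / powR (enorm e) (2 * s).

(* the lattice E = { k_1 p_1 + ... + k_n p_n : k_i in Z }, p_i = T^{-1} e_i
   (with the linear map x |-> x *m T on row vectors, T^{-1} e_i = e_i *m invmx T) *)
Definition lattice (T : 'M[R]_n) : set V :=
  [set y | exists k : 'I_n -> int, y = \sum_i (k i)%:~R *: (basis_vec i *m invmx T)].

End Defs.

Arguments basis_vec {R n}.
Arguments partial {R n}.
Arguments hessian {R n}.
Arguments C2 {R n}.
Arguments enorm {R n}.
Arguments qform {R n}.
Arguments sqnorm {R n}.
Arguments incr {R n}.
Arguments lattice {R n}.

From HB Require Import structures.
From mathcomp Require Import all_boot all_order all_algebra.
From mathcomp Require Import all_classical all_reals all_analysis.
From mathcomp Require Import ring.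
Import Order.TTheory GRing.Theory Num.Theory.
Import numFieldNormedType.Exports.
Local Open Scope ring_scope.
Local Open Scope classical_set_scope.

(* The Hessian of the increment is the second difference of Hessians,
   D^2(Delta_e^s v)(x) = |e|^-2s (D^2v(x+e) + D^2v(x-e) - 2 D^2v(x)), and
   B |-> sum_ij cof_ij(A) B_ij = tr(adj A B) is linear with tr(adj A A) = n det A.
   The claim thus reduces to tr(adj A B) >= n (det A)^((n-1)/n) (det B)^(1/n) for
   symmetric positive definite A, B, the tangent inequality of the concave map
   det^(1/n).  Writing A = L D L^T and B = L M L^T with det L = 1, the trace is
   det A * sum_i M_ii / d_i, bounded below by AM-GM together with Hadamard's
   inequality det M <= prod_i M_ii.  The Hessians are symmetric by Schwarz's
   theorem, proved from the mean value theorem. *)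

Section DirectionalDerivative.
Variables (R : realType) (V W : normedModType R).
Implicit Types (f : V -> W) (x e w : V).

Lemma translate_shift f e x : (fun y => f (y + e)) \o shift x = f \o shift (x + e).
Proof. by apply/funext => h /=; rewrite addrA. Qed.

Lemma derive_translate f e x w : 'D_w (fun y => f (y + e)) x = 'D_w f (x + e).
Proof. by rewrite /derive translate_shift. Qed.

Lemma derivable_translate f e x w :
  derivable (fun y => f (y + e)) x w <-> derivable f (x + e) w.
Proof. by rewrite /derivable translate_shift. Qed.

Lemma line_quotient f y w t :
  (fun h : R => h^-1 *:
     (((fun s : R => f (y + s *: w)) \o shift t) (h *: 1) - f (y + t *: w)))
  = (fun h : R => h^-1 *: ((f \o shift (y + t *: w)) (h *: w) - f (y + t *: w))).
Proof. by apply/funext => h /=; rewrite [h *: 1]mulr1 scalerDl addrCA addrC. Qed.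

Lemma derive_line f y w t : 'D_1 (fun s : R => f (y + s *: w)) t = 'D_w f (y + t *: w).
Proof. by rewrite /derive line_quotient. Qed.

Lemma derivable_line f y w t :
  derivable (fun s : R => f (y + s *: w)) t 1 <-> derivable f (y + t *: w) w.
Proof. by rewrite /derivable line_quotient. Qed.
End DirectionalDerivative.

Section MixedDerivatives.
Variables (R : realType) (V : normedModType R).
Implicit Types (f F : V -> R) (x y a b w : V).

Lemma MVT_line f y w h : 0 <= h -> (forall z, derivable f z w) ->
  exists2 t, 0 <= t <= h & f (y + h *: w) - f y = 'D_w f (y + t *: w) * h.
Proof.
move=> h0 df.
have dl t : derivable (fun s : R => f (y + s *: w)) t 1 by apply/derivable_line.
have [t /itvP tI] := MVT_segment h0 (fun t _ => derivableP (dl t))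
  (derivable_within_continuous (fun t _ => dl t)).
by rewrite scale0r addr0 subr0 derive_line => ->; exists t; rewrite ?tI.
Qed.

Lemma MVT_second_difference f x a b h : 0 <= h ->
  (forall y, derivable f y a) -> (forall y, derivable ('D_a f) y b) ->
  exists t s, [/\ 0 <= t <= h, 0 <= s <= h &
    f (x + h *: a + h *: b) - f (x + h *: a) - f (x + h *: b) + f x
    = 'D_b ('D_a f) (x + t *: a + s *: b) * h * h].
Proof.
move=> h0 da dab.
pose g y := f (y + h *: b) - f y.
have dfb y : derivable (fun z => f (z + h *: b)) y a by apply/derivable_translate.
have [t tI Et] := MVT_line g x a h h0 (fun y => derivableB (dfb y) (da y)).
have [s sI Es] := MVT_line ('D_a f) (x + t *: a) b h h0 dab.
exists t, s; split => //.
have -> : f (x + h *: a + h *: b) - f (x + h *: a) - f (x + h *: b) + f x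
    = g (x + h *: a) - g x by rewrite /g opprB addrA addrAC.
by rewrite Et deriveB // derive_translate Es.
Qed.

Lemma continuous_box F x a b e : {for x, continuous F} -> 0 < e ->
  exists2 h, 0 < h & forall t s, 0 <= t <= h -> 0 <= s <= h ->
    `|F x - F (x + t *: a + s *: b)| < e.
Proof.
move=> /cvgrPdist_lt /(_ e) Fx e0; have /nbhs_normP [d d0 Fd] := Fx e0.
have ab0 : 0 < `|a| + `|b| + 1 by rewrite ltr_wpDl // addr_ge0.
exists (d / (`|a| + `|b| + 1)) => [|t s /andP[t0 th] /andP[s0 sh]].
  by rewrite divr_gt0.
apply: Fd; rewrite /= -addrA opprD addrA subrr add0r normrN.
apply: (le_lt_trans (ler_normD _ _)); rewrite !normrZ !ger0_norm //.
apply: (@le_lt_trans _ _ (d / (`|a| + `|b| + 1) * (`|a| + `|b|))).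
  by rewrite mulrDr lerD // ler_wpM2r.
by rewrite mulrAC ltr_pdivrMr // ltr_pM2l // ltrDl.
Qed.

Lemma schwarz f x a b :
  (forall y, derivable f y a) -> (forall y, derivable f y b) ->
  (forall y, derivable ('D_a f) y b) -> (forall y, derivable ('D_b f) y a) ->
  {for x, continuous ('D_b ('D_a f))} -> {for x, continuous ('D_a ('D_b f))} ->
  'D_b ('D_a f) x = 'D_a ('D_b f) x.
Proof.
move=> da db dab dba cab cba.
apply/eqP; rewrite -subr_eq0 -normr_le0; apply/ler_addgt0Pr => e e0; rewrite add0r.
have e2 : 0 < e / 2 by rewrite divr_gt0.
have [h1 h10 near1] := continuous_box _ _ a b _ cab e2.
have [h2 h20 near2] := continuous_box _ _ b a _ cba e2.
pose h := Num.min h1 h2.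
have h0 : 0 < h by rewrite lt_min h10 h20.
have le_h1 t : 0 <= t <= h -> 0 <= t <= h1.
  by case/andP=> -> /le_trans; apply; rewrite ge_min lexx.
have le_h2 t : 0 <= t <= h -> 0 <= t <= h2.
  by case/andP=> -> /le_trans; apply; rewrite ge_min lexx orbT.
have [t1 [s1 [/le_h1 t1I /le_h1 s1I E1]]] :=
  MVT_second_difference f x a b h (ltW h0) da dab.
have [t2 [s2 [/le_h2 t2I /le_h2 s2I E2]]] :=
  MVT_second_difference f x b a h (ltW h0) db dba.
have E : 'D_b ('D_a f) (x + t1 *: a + s1 *: b) = 'D_a ('D_b f) (x + t2 *: b + s2 *: a).
  apply: (mulIf (lt0r_neq0 h0)); apply: (mulIf (lt0r_neq0 h0)); rewrite -E1 -E2.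
  by rewrite [x + h *: b + h *: a]addrAC; congr (_ + _); apply: addrAC.
have -> : 'D_b ('D_a f) x - 'D_a ('D_b f) x
    = ('D_b ('D_a f) x - 'D_b ('D_a f) (x + t1 *: a + s1 *: b))
      - ('D_a ('D_b f) x - 'D_a ('D_b f) (x + t2 *: b + s2 *: a)).
  by rewrite E opprB addrA subrK.
rewrite (splitr e); apply: (le_trans (ler_normB _ _)).
by apply: lerD; apply: ltW; [exact: near1 | exact: near2].
Qed.
End MixedDerivatives.

Section Hessian.
Variables (R : realType) (n : nat).
Implicit Types (f g : 'rV[R]_n -> R) (x e w : 'rV[R]_n) (s : R).

Lemma hessian_sym f x : C2 f -> (hessian f x)^T = hessian f x.
Proof.
case=> d1 [d2 c2]; apply/matrixP => i j; rewrite !mxE /partial.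
by apply: schwarz => //;
  [move=> y; apply: d2 | move=> y; apply: d2 | apply: c2 | apply: c2].
Qed.

Lemma derive_incr s e g x w : (forall y, derivable g y w) ->
  'D_w (incr s e g) x = incr s e ('D_w g) x.
Proof.
move=> dg; set c := powR (enorm e) (2 * s).
pose gp y := g (y + e); pose gm y := g (y - e).
have dp : derivable gp x w by apply/derivable_translate.
have dm : derivable gm x w by apply/derivable_translate.
have d2g : derivable (2 \*: g) x w := @derivableZ _ _ _ g 2 x w (dg x).
have dpm := derivableD dp dm.
have -> : incr s e g = c^-1 \*: (gp + gm - 2 \*: g).
  by apply/funext => y; rewrite /incr /= mulrC.
have D2 : 'D_w (gp + gm - 2 \*: g) x = 'D_w g (x + e) + 'D_w g (x - e) - 2 * 'D_w g x.
  by rewrite (deriveB dpm d2g) (deriveD dp dm) deriveZ // !derive_translate.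
rewrite (deriveZ c^-1 (derivableB dpm d2g)) D2; exact: mulrC.
Qed.

Lemma hessian_incr s e f x : C2 f ->
  hessian (incr s e f) x = (powR (enorm e) (2 * s))^-1 *:
    (hessian f (x + e) + hessian f (x - e) - 2 *: hessian f x).
Proof.
case=> d1 [d2 _]; apply/matrixP => i j; rewrite !mxE /partial.
have -> : (fun y => 'D_(basis_vec j) (incr s e f) y) = incr s e ('D_(basis_vec j) f).
  by apply/funext => y; rewrite derive_incr.
by rewrite derive_incr => [|y]; [exact: mulrC | exact: d2].
Qed.
End Hessian.

Section PositiveDefinite.
Context {R : realFieldType}.

Definition posdefmx {n} (A : 'M[R]_n) :=
  A^T = A /\ forall x : 'rV_n, x != 0 -> 0 < (x *m A *m x^T) 0 0.

Lemma posdefmx_mulmx_tr n (P A : 'M[R]_n) :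
  P \in unitmx -> posdefmx A -> posdefmx (P *m A *m P^T).
Proof.
move=> Pu [sA pA]; split; first by rewrite !trmx_mul trmxK sA mulmxA.
move=> x x0; rewrite !mulmxA -(mulmxA _ P^T) -trmx_mul.
by apply: pA; apply: contra x0 => /eqP xP0; rewrite -[x](mulmxK Pu) xP0 mul0mx.
Qed.

Lemma sym_block_mx {n} (A : 'M[R]_(1 + n)) : A^T = A ->
  exists a (c : 'cV_n) A', A = block_mx a%:M c^T c A'.
Proof.
move=> sA; exists (ulsubmx A 0 0), (dlsubmx A), (drsubmx A).
by rewrite -mx11_scalar trmx_dlsub sA submxK.
Qed.

Lemma posdefmx_corner_gt0 {n} {a} {c : 'cV[R]_n} {A} :
  posdefmx (block_mx a%:M c^T c A) -> 0 < a.
Proof.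
case=> _ /(_ (row_mx 1 0)); rewrite row_mx_eq0 negb_and oner_eq0 => /(_ isT).
rewrite mul_row_block !mul0mx !addr0 !mul1mx tr_row_mx mul_row_col trmx0 mulmx0 addr0.
by rewrite trmx1 mulmx1 mxE eqxx mulr1n.
Qed.

Lemma posdefmx_schur {n} {a} {c : 'cV[R]_n} {A} :
  posdefmx (block_mx a%:M c^T c A) -> posdefmx (A - a^-1 *: (c *m c^T)).
Proof.
move=> pM; have a0 := posdefmx_corner_gt0 pM; case: pM => sM pM.
move: sM; rewrite tr_block_mx => /eq_block_mx [_ _ _ sA].
split; first by rewrite linearB /= linearZ /= trmx_mul trmxK sA.
move=> y y0; pose t := - a^-1 *: (y *m c).
have := pM (row_mx t y); rewrite row_mx_eq0 negb_and y0 orbT => /(_ isT).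
rewrite mul_row_block tr_row_mx mul_row_col mul_mx_scalar.
have -> : a *: t + y *m c = 0.
  by rewrite /t scalerA mulrN mulfV ?gt_eqF // scaleN1r addNr.
rewrite mul0mx add0r mulmxDl mulmxBr mulmxBl /t -!scalemxAl -!scalemxAr.
by rewrite !scaleNr !mulmxA -scalemxAl addrC.
Qed.

Lemma ldl_decomposition {n} {A : 'M[R]_n} : posdefmx A ->
  exists L (d : 'rV_n), [/\ \det L = 1, forall i, 0 < d 0 i,
    forall i, d 0 i <= A i i & A = L *m diag_mx d *m L^T].
Proof.
elim: n A => [|n IH] A pA.
  by exists 1%:M, 0; split; [exact: det1 | case | case | apply/matrixP => -[]].
move: A pA; rewrite -[n.+1]/(1 + n)%N => A pA.
have [a [c [A' EA]]] := sym_block_mx A pA.1.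
move: EA pA => -> pA; have a0 := posdefmx_corner_gt0 pA.
have [L1 [d1 [dL1 d1_gt0 d1_le ES]]] := IH _ (posdefmx_schur pA).
exists (block_mx 1%:M 0 (a^-1 *: c) L1), (row_mx a%:M d1); split.
- by rewrite (det_lblock (1%:M : 'M[R]_1)) det1 dL1 mulr1.
- move=> i; case: (split_ordP i) => k ->.
    by rewrite row_mxEl mxE ord1 eqxx mulr1n.
  by rewrite row_mxEr.
- move=> i; case: (split_ordP i) => k ->.
    by rewrite row_mxEl block_mxEul !mxE ord1 eqxx.
  rewrite row_mxEr block_mxEdr; apply: (le_trans (d1_le k)).
  rewrite !mxE big_ord1 !mxE lerBlDr lerDl.
  by apply: mulr_ge0; [rewrite invr_ge0 ltW | rewrite -expr2 sqr_ge0].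
have diag_a : diag_mx (a%:M : 'rV_1) = a%:M.
  by apply/matrixP => i j; rewrite !mxE !ord1 eqxx.
rewrite diag_mx_row diag_a mulmx_block tr_block_mx mulmx_block.
rewrite !mulmx0 !mul0mx !addr0 !add0r mul1mx mul_mx_scalar.
rewrite trmx1 trmx0 !mulmx0 !mul0mx !addr0 !mulmx1 scalerA mulfV ?gt_eqF // scale1r.
rewrite linearZ /= -ES mul_scalar_mx scalerA mulfV ?gt_eqF // scale1r.
by rewrite -scalemxAr addrC subrK.
Qed.

Lemma ldl_det {n} {A L : 'M[R]_n} {d} :
  \det L = 1 -> A = L *m diag_mx d *m L^T -> \det A = \prod_i d 0 i.
Proof. by move=> dL ->; rewrite !det_mulmx det_tr dL mul1r mulr1 det_diag. Qed.

Lemma posdefmx_det_gt0 {n} {A : 'M[R]_n} : posdefmx A -> 0 < \det A.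
Proof.
by case/ldl_decomposition=> L [d [dL d_gt0 _ EA]]; rewrite (ldl_det dL EA) prodr_gt0.
Qed.

Lemma hadamard_posdefmx {n} {A : 'M[R]_n} : posdefmx A -> \det A <= \prod_i A i i.
Proof.
case/ldl_decomposition=> L [d [dL d_gt0 d_le EA]]; rewrite (ldl_det dL EA).
by apply: ler_prod => i _; rewrite ltW ?d_le.
Qed.

Lemma posdefmx_diag_gt0 {n} {A : 'M[R]_n} i : posdefmx A -> 0 < A i i.
Proof.
by case/ldl_decomposition=> L [d [_ d_gt0 d_le _]]; exact: lt_le_trans (d_le i).
Qed.

Lemma mxtrace_adj_ldl {n} {A B L M : 'M[R]_n} {d : 'rV_n} :
  \det L = 1 -> (forall i, 0 < d 0 i) ->
  A = L *m diag_mx d *m L^T -> B = L *m M *m L^T ->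
  \tr (\adj A *m B) = \sum_i \det A / d 0 i * M i i.
Proof.
move=> dL d_gt0 EA EB.
have Lu : L \in unitmx by rewrite unitmxE dL unitr1.
have Du : diag_mx d \in unitmx.
  by rewrite unitmxE det_diag unitfE gt_eqF // prodr_gt0.
pose N := L^T *m \adj A *m L.
have DN : diag_mx d *m N = (\det A)%:M.
  have <- : invmx L *m (A *m \adj A) *m L = (\det A)%:M.
    by rewrite mul_mx_adj mul_mx_scalar -scalemxAl mulVmx // scalemx1.
  by rewrite {1}EA /N !mulmxA mulVmx // mul1mx.
have NE : N = diag_mx (\row_i (\det A / d 0 i)).
  apply: (can_inj (mulKmx Du)); rewrite DN mul_diag_mx.
  apply/matrixP => i j; rewrite !mxE.
  case: (eqVneq i j) => [->|ij]; last by rewrite !mulr0n mulr0.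
  by rewrite !mulr1n mulrCA divff ?gt_eqF // mulr1.
rewrite EB !mulmxA mxtrace_mulC !mulmxA -/N NE mul_diag_mx /mxtrace.
by apply: eq_bigr => i _; rewrite !mxE.
Qed.

Lemma AGM_sum_ge n (E : 'I_n -> R) q : (0 < n)%N -> 0 <= q ->
  (forall i, 0 <= E i) -> q ^+ n <= \prod_i E i -> n%:R * q <= \sum_i E i.
Proof.
move=> n_gt0 q0 E0 qE; have [AGM _] := leif_AGM (A := predT) (fun i _ => E0 i).
rewrite cardT size_enum_ord in AGM.
have : q <= (\sum_i E i) / n%:R.
  rewrite -(ler_pXn2r n_gt0) ?nnegrE ?divr_ge0 ?sumr_ge0 //.
  exact: le_trans qE AGM.
by rewrite ler_pdivlMr ?ltr0n // mulrC.
Qed.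

Lemma mxtrace_adj_mul_ge {n} {A B : 'M[R]_n} {a b : R} : (0 < n)%N ->
  posdefmx A -> posdefmx B -> 0 < a -> 0 <= b ->
  a ^+ n = \det A -> b ^+ n = \det B ->
  n%:R * a ^+ n.-1 * b <= \tr (\adj A *m B).
Proof.
move=> n_gt0 pA pB a0 b0 Ea Eb.
have [L [d [dL d_gt0 _ EA]]] := ldl_decomposition pA.
have Lu : L \in unitmx by rewrite unitmxE dL unitr1.
pose M := invmx L *m B *m (invmx L)^T.
have EB : B = L *m M *m L^T.
  by rewrite /M !mulmxA mulmxV // mul1mx -mulmxA -trmx_mul mulmxV // trmx1 mulmx1.
have pM : posdefmx M by apply: posdefmx_mulmx_tr; rewrite ?unitmx_inv.
have detM : \det M = \det B.
  by rewrite /M !det_mulmx det_tr det_inv dL invr1 mul1r mulr1.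
rewrite (mxtrace_adj_ldl dL d_gt0 EA EB).
have -> : \sum_i \det A / d 0 i * M i i = a ^+ n * \sum_i M i i / d 0 i.
  by rewrite mulr_sumr; apply: eq_bigr => i _; rewrite Ea mulrAC mulrA.
have -> : n%:R * a ^+ n.-1 * b = a ^+ n * (n%:R * (b / a)).
  by rewrite -(prednK n_gt0) exprS /=; field; rewrite gt_eqF.
apply: ler_wpM2l; first by rewrite exprn_ge0 ?ltW.
apply: AGM_sum_ge => //.
- exact: divr_ge0 b0 (ltW a0).
- by move=> i; apply: divr_ge0; apply: ltW; [exact: posdefmx_diag_gt0 | exact: d_gt0].
rewrite expr_div_n Ea Eb -detM prodf_div -(ldl_det dL EA).
by rewrite ler_pM2r ?invr_gt0 ?posdefmx_det_gt0 ?hadamard_posdefmx.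
Qed.

End PositiveDefinite.

Lemma mxtrace_adj_mul_cofactor (R : comNzRingType) n (A B : 'M[R]_n) :
  \tr (\adj A *m B) = \sum_i \sum_j cofactor A i j * B i j.
Proof.
rewrite exchange_big; apply: eq_bigr => i _; rewrite mxE.
by apply: eq_bigr => j _; rewrite mxE.
Qed.

Section DeterminantRoot.
Variables (R : realType) (n : nat).
Hypothesis n_gt0 : (0 < n)%N.

Lemma exprn_powRV (a : R) : 0 <= a -> (a `^ n%:R^-1) ^+ n = a.
Proof.
move=> a0; rewrite -powR_mulrn ?powR_ge0 // -powRrM mulVf ?powRr1 //.
by rewrite pnatr_eq0 -lt0n.
Qed.

Lemma powR_predn_divn (a : R) : 0 <= a ->
  a `^ ((n%:R - 1) / n%:R) = (a `^ n%:R^-1) ^+ n.-1.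
Proof.
move=> a0; rewrite -powR_mulrn ?powR_ge0 // -powRrM mulrC.
by rewrite -[in n%:R - 1](prednK n_gt0) -natr1 addrK.
Qed.

Lemma mxtrace_adj_second_difference (A Bp Bm : 'M[R]_n) (c : R) : 0 <= c ->
  posdefmx A -> posdefmx Bp -> posdefmx Bm ->
  n%:R * (\det A) `^ ((n%:R - 1) / n%:R)
    * (((\det Bp) `^ n%:R^-1 + (\det Bm) `^ n%:R^-1 - 2 * (\det A) `^ n%:R^-1) / c)
  <= \tr (\adj A *m (c^-1 *: (Bp + Bm - 2 *: A))).
Proof.
move=> c0 pA pBp pBm.
have root_det (B : 'M[R]_n) : posdefmx B -> ((\det B) `^ n%:R^-1) ^+ n = \det B.
  by move=> /posdefmx_det_gt0/ltW; exact: exprn_powRV.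
have a0 : 0 < (\det A) `^ n%:R^-1 by rewrite powR_gt0 ?posdefmx_det_gt0.
have Kp := mxtrace_adj_mul_ge n_gt0 pA pBp a0 (powR_ge0 _ _)
  (root_det _ pA) (root_det _ pBp).
have Km := mxtrace_adj_mul_ge n_gt0 pA pBm a0 (powR_ge0 _ _)
  (root_det _ pA) (root_det _ pBm).
rewrite powR_predn_divn; last exact/ltW/posdefmx_det_gt0.
rewrite -scalemxAr mxtraceZ mulmxBr mulmxDr -scalemxAr raddfB /= mxtraceD mxtraceZ.
rewrite mul_adj_mx mxtrace_scalar -[in \det A *+ n](root_det _ pA).
move: Kp Km; set a := (\det A) `^ _; set bp := (\det Bp) `^ _; set bm := (\det Bm) `^ _.
move=> Kp Km; rewrite [leLHS](_ : _ = c^-1 * (n%:R * a ^+ n.-1 * bp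
    + n%:R * a ^+ n.-1 * bm - 2 * (a ^+ n *+ n))); last first.
  by rewrite -mulr_natl -[in a ^+ n](prednK n_gt0) exprS; ring.
apply: ler_wpM2l; first by rewrite invr_ge0.
by apply: lerB => //; apply: lerD.
Qed.

End DeterminantRoot.

Lemma sqnorm_gt0 {R : realType} {n} {xi : 'rV[R]_n} : xi != 0 -> 0 < sqnorm xi.
Proof.
move=> xi0; rewrite lt_def sumr_ge0 ?andbT => [|i _]; last exact: sqr_ge0.
apply: contra xi0 => /eqP/psumr_eq0P xi_eq0; apply/eqP/rowP => i.
by have /eqP := xi_eq0 (fun i _ => sqr_ge0 _) i isT; rewrite mxE sqrf_eq0 => /eqP.
Qed.

Theorem lemma3p1 (R : realType) (n : nat) (alpha d0 c0 theta c1 c2 : R)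
    (fp f u : 'rV[R]_n -> R) (T : 'M[R]_n) :
  (0 < n)%N ->
  0 < alpha < 1 ->
  (* f_p : positive, bounded, C^alpha, Z^n-periodic *)
  (forall x, d0^-1 <= fp x <= d0) ->
  (forall x y, `|fp x - fp y| <= d0 * powR (enorm (x - y)) alpha) ->
  (forall x i, fp (x + basis_vec i) = fp x) ->
  (* f in C^alpha(R^n), a perturbation of f_p decaying at infinity *)
  (exists C, forall x y, `|f x - f y| <= C * powR (enorm (x - y)) alpha) ->
  (forall eps, 0 < eps -> exists R0, forall x, R0 < enorm x -> `|f x - fp x| <= eps) ->
  (* u convex, C^{2,alpha}_loc, solution of det D^2 u = f *)
  (forall x y (t : R), 0 <= t <= 1 ->
      u ((1 - t) *: x + t *: y) <= (1 - t) * u x + t * u y) ->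
  C2 u ->
  (forall r, 0 < r -> exists C, forall x y i j, enorm x <= r -> enorm y <= r ->
      `|hessian u x i j - hessian u y i j| <= C * powR (enorm (x - y)) alpha) ->
  (forall x, \det (hessian u x) = f x) ->
  (* T linear, det T = 1, asymptotics of u(Tx) *)
  \det T = 1 ->
  (forall x, 1 <= enorm x ->
      `|u (x *m T) - 2^-1 * enorm x ^+ 2| <= c0 * powR (enorm x) (2 - theta)) ->
  (* v = u o T : det D^2 v = f_T, v in C^2, c1 I <= D^2 v <= c2 I *)
  let v := fun x => u (x *m T) in
  let fT := fun x => f (x *m T) in
  (forall x, \det (hessian v x) = fT x) ->
  C2 v ->
  0 < c1 -> 0 < c2 ->
  (forall x xi, c1 * sqnorm xi <= qform (hessian v x) xi <= c2 * sqnorm xi) ->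
  forall s : R, 0 < s < alpha / 2 ->
  forall (x : 'rV[R]_n) (e : 'rV[R]_n), lattice T e -> e != 0 ->
    \sum_i \sum_j cofactor (hessian v x) i j * hessian (incr s e v) x i j
    >= n%:R * powR (\det (hessian v x)) ((n%:R - 1) / n%:R)
       * ((powR (fT (x + e)) n%:R^-1 + powR (fT (x - e)) n%:R^-1
           - 2 * powR (fT x) n%:R^-1) / powR (enorm e) (2 * s)).
Proof.
move=> n_gt0 _ _ _ _ _ _ _ _ _ _ _ _ v fT det_hv C2v c1_gt0 _ hv_bound s _ x e _ _.
have pd_hv y : posdefmx (hessian v y).
  split=> [|xi xi0]; first exact: hessian_sym.
  apply: lt_le_trans (mulr_gt0 c1_gt0 (sqnorm_gt0 xi0)) _.
  by case/andP: (hv_bound y xi).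
rewrite -!det_hv -mxtrace_adj_mul_cofactor hessian_incr //.
exact: mxtrace_adj_second_difference (powR_ge0 _ _) (pd_hv _) (pd_hv _) (pd_hv _).
Qed.
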